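(* For all integers $p\ge1$ and $q\ge3$, $\chi_s(UC_q\,\square\,BC_{2p+1})>4$.
   Context: A signed graph $(G,\sigma)$ is a simple loopless undirected graph with a signature $\sigma:E(G)\to\{+1,-1\}$. Switching a vertex negates the signs of its incident edges; two signatures are equivalent if one is obtained from the other by switching a set of vertices. A homomorphism of $(G,\sigma)$ to $(H,\pi)$ is a graph homomorphism $\varphi:G\to H$ for which there is a signature $\sigma'$ equivalent to $\sigma$ with $\pi(\varphi(u)\varphi(v))=\sigma'(uv)$ for every edge $uv$; $\chi_s(G,\sigma)$ is the smallest order of a signed graph to which $(G,\sigma)$ admits a homomorphism. $UC_k$ (resp. $BC_k$) denotes a cycle on $k$ vertices with an odd (resp. even) number of negative edges (well defined up to equivalence). The Cartesian product $(G,\sigma)\,\square\,(H,\pi)$ is the signed graph on $G\,\square\,H$ where $(u,v_1)(u,v_2)$ has sign $\pi(v_1v_2)$ and $(u_1,v)(u_2,v)$ has sign $\sigma(u_1u_2)$. *)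

From mathcomp Require Import all_boot.

(* A signed graph: finite vertex type, adjacency relation, and a signature
   given as a relation; [ssign G u v = true] means the edge uv is NEGATIVE.
   The signature is only meaningful on edges. *)
Record sgraph := SGraph { svert : finType; sadj : rel svert; ssign : rel svert }.
Set Implicit Arguments. Unset Strict Implicit. Unset Printing Implicit Defensive.

Definition simple_sgraph (G : sgraph) : Prop :=
  symmetric (sadj G) /\ irreflexive (sadj G) /\
  (forall u v, sadj G u v -> ssign G u v = ssign G v u).

Definition switch_sign (G : sgraph) (X : {set svert G}) : rel (svert G) :=
  fun u v => ssign G u v (+) (u \in X) (+) (v \in X).

Definition sg_hom (G H : sgraph) (phi : svert G -> svert H) : Prop :=
  (forall u v, sadj G u v -> sadj H (phi u) (phi v)) /\
  exists X : {set svert G},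
    forall u v, sadj G u v -> ssign H (phi u) (phi v) = switch_sign X u v.

Definition is_signed_chi (G : sgraph) (n : nat) : Prop :=
  (exists H : sgraph, simple_sgraph H /\ #|svert H| = n /\
     exists phi, @sg_hom G H phi) /\
  (forall (H : sgraph) (phi : svert G -> svert H),
     simple_sgraph H -> @sg_hom G H phi -> n <= #|svert H|).

Definition cycle_adj (k : nat) : rel 'I_k :=
  fun i j => (val j == i.+1 %% k) || (val i == j.+1 %% k).

(* UC_k: exactly one negative edge, namely {k-1, 0} (odd number of negative edges) *)
Definition UC (k : nat) : sgraph :=
  @SGraph 'I_k (@cycle_adj k)
    (fun i j => ((val i == k.-1) && (val j == 0)) || ((val j == k.-1) && (val i == 0))).

(* BC_k: all edges positive (even number, zero, of negative edges) *)
Definition BC (k : nat) : sgraph :=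
  @SGraph 'I_k (@cycle_adj k) (fun _ _ => false).

Definition sg_box (G H : sgraph) : sgraph :=
  @SGraph (svert G * svert H)%type
    (fun x y => ((x.1 == y.1) && sadj H x.2 y.2) || ((x.2 == y.2) && sadj G x.1 y.1))
    (fun x y => if x.1 == y.1 then ssign H x.2 y.2 else ssign G x.1 y.1).

From Stdlib Require Import Wf_nat Classical_Prop.
From mathcomp Require Import all_boot zify.
Set Implicit Arguments. Unset Strict Implicit. Unset Printing Implicit Defensive.

(* A homomorphism of UC_q □ BC_N (N odd) to H, together with its switching set,
   lifts to the double cover of H: each copy {i} × BC_N becomes a closed walk of
   odd length N, consecutive copies are joined by 4-cycles, and crossing the
   negative edges of UC_q exchanges the two sheets, so that the last copy is the
   first one with every sheet label flipped.  The parity of the number of edges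
   of a copy lying on sheet 1 survives a 4-cycle unless both of its diagonals
   change sheet, while flipping all labels of a closed walk of odd length changes
   it.  Some 4-cycle therefore has both diagonals changing sheet, i.e. its image
   in H is a 4-cycle whose edge signs alternate.  But if H has at most 4 vertices,
   switch it so that all edges at one vertex v have the same sign: every 4-cycle
   of H then passes through v, so none alternates. *)

Definition double_cover_adj (H : sgraph) : rel (svert H * bool) :=
  fun P Q => sadj H P.1 Q.1 && (ssign H P.1 Q.1 == P.2 (+) Q.2).

Lemma double_cover_adj_sym (H : sgraph) :
  simple_sgraph H -> symmetric (@double_cover_adj H).
Proof.
move=> [Hsym [_ Hsg]] P Q; rewrite /double_cover_adj Hsym addbC.
by case: (boolP (sadj H Q.1 P.1)) => //= QP; rewrite (Hsg _ _ QP).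
Qed.

Lemma sg_hom_lift (G H : sgraph) (phi : svert G -> svert H) :
  sg_hom phi -> exists X : {set svert G}, forall u v a b,
    sadj G u v -> ssign G u v = a (+) b ->
    double_cover_adj (phi u, (u \in X) (+) a) (phi v, (v \in X) (+) b).
Proof.
case=> hadj [X hsg]; exists X => u v a b uv sg_uv.
rewrite /double_cover_adj /= hadj //= hsg // /switch_sign {}sg_uv.
by case: (u \in X); case: (v \in X); case: a; case: b.
Qed.

Definition switched (H : sgraph) (Y : {set svert H}) : sgraph :=
  @SGraph (svert H) (sadj H) (switch_sign Y).

Lemma switched_simple (H : sgraph) (Y : {set svert H}) :
  simple_sgraph H -> simple_sgraph (switched Y).
Proof.
move=> [Hsym [Hirr Hsg]]; split; [exact: Hsym | split; [exact: Hirr|]].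
by move=> u v /Hsg; rewrite /= /switch_sign => ->; rewrite addbAC.
Qed.

Lemma sg_hom_switched (G H : sgraph) (Y : {set svert H}) (phi : svert G -> svert H) :
  sg_hom phi -> @sg_hom G (switched Y) phi.
Proof.
case=> hadj [X hsg]; split=> //.
exists [set u | (u \in X) (+) (phi u \in Y)] => u v uv.
rewrite /= /switch_sign hsg // /switch_sign !inE.
by case: (ssign G u v); case: (u \in X); case: (v \in X); case: (phi u \in Y);
  case: (phi v \in Y).
Qed.

(* [ssign H v v] is a junk value: what matters is that it does not depend on [x]. *)
Lemma switched_star_sign (H : sgraph) (v x : svert H) :
  ssign (switched [set z | ssign H v z]) v x = ssign H v v.
Proof. by rewrite /= /switch_sign !inE addbAC addbb. Qed.

Definition alternating_square (H : sgraph) (x1 x2 x3 x4 : svert H) : bool :=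
  [&& sadj H x1 x2, sadj H x2 x3, sadj H x3 x4, sadj H x4 x1 &
    [&& ssign H x4 x1 != ssign H x1 x2, ssign H x1 x2 != ssign H x2 x3,
        ssign H x2 x3 != ssign H x3 x4 & ssign H x3 x4 != ssign H x4 x1]].

Lemma double_cover_square_alternating (H : sgraph) (P1 P2 P3 P4 : svert H * bool) :
  double_cover_adj P1 P2 -> double_cover_adj P2 P3 ->
  double_cover_adj P3 P4 -> double_cover_adj P4 P1 ->
  (P1.2 != P3.2) && (P2.2 != P4.2) -> alternating_square P1.1 P2.1 P3.1 P4.1.
Proof.
move: P1 P2 P3 P4 => [x1 t1] [x2 t2] [x3 t3] [x4 t4].
rewrite /double_cover_adj /alternating_square /=.
move=> /andP[-> /eqP->] /andP[-> /eqP->] /andP[-> /eqP->] /andP[-> /eqP->] /=.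
by case: t1; case: t2; case: t3; case: t4.
Qed.

Lemma small_uniform_no_alternating_square (H : sgraph) (v : svert H) :
  simple_sgraph H -> #|svert H| <= 4 -> (forall x y, ssign H v x = ssign H v y) ->
  forall x1 x2 x3 x4 : svert H, ~~ alternating_square x1 x2 x3 x4.
Proof.
move=> [Hsym [Hirr Hsg]] small unif x1 x2 x3 x4.
apply/negP => /and5P[a12 a23 a34 a41 /and4P[s1 s2 s3 s4]].
have corner x z : sadj H x v -> (ssign H x v != ssign H v z) = false.
  by move=> xv; rewrite (Hsg _ _ xv) (unif x z) eqxx.
have adj_eqF x y : sadj H x y -> (x == y) = false.
  by move=> xy; apply/eqP => exy; rewrite exy Hirr in xy.
(* A genuine 4-cycle on at most 4 vertices goes through v. *)
have /or4P[] : [|| v == x1, v == x2, v == x3 | v == x4].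
  apply/negPn/negP => v_out.
  have x13 : (x1 == x3) = false.
    by apply/eqP => e; rewrite -e (Hsg _ _ a12) eqxx in s2.
  have x24 : (x2 == x4) = false.
    by apply/eqP => e; rewrite -e (Hsg _ _ a23) eqxx in s3.
  have a14 : sadj H x1 x4 by rewrite Hsym.
  have : uniq [:: v; x1; x2; x3; x4].
    by rewrite /= !inE v_out x13 x24 !adj_eqF.
  move/card_uniqP => card5.
  by have := leq_trans (max_card (mem [:: v; x1; x2; x3; x4])) small; rewrite card5.
- by move/eqP => e; subst v; rewrite corner in s1.
- by move/eqP => e; subst v; rewrite corner in s2.
- by move/eqP => e; subst v; rewrite corner in s3.
- by move/eqP => e; subst v; rewrite corner in s4.
Qed.

Lemma small_switching_no_alternating_square (H : sgraph) :
  simple_sgraph H -> #|svert H| <= 4 -> exists Y : {set svert H},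
    forall x1 x2 x3 x4 : svert (switched Y), ~~ alternating_square x1 x2 x3 x4.
Proof.
move=> sH small; case: (pickP (@predT (svert H))) => [v _ | none].
  exists [set z | ssign H v z].
  apply: (@small_uniform_no_alternating_square (switched [set z | ssign H v z]) v) => //.
    exact: switched_simple.
  by move=> x y; rewrite !switched_star_sign.
by exists set0 => x1; have := none x1.
Qed.

Lemma addb_square (a b c d : bool) :
  (a && b) (+) (d && c) = (a && d) (+) (b && c) (+) ((a != c) && (b != d)).
Proof. by case: a; case: b; case: c; case: d. Qed.

Lemma big_ordS (R : Type) (idx : R) (op : Monoid.com_law idx) n (F : 'I_n -> R) :
  \big[op/idx]_(j < n) F (ordS j) = \big[op/idx]_(j < n) F j.
Proof. exact: esym (reindex_inj (@ordS_inj n)). Qed.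

Lemma big_addb_true n : \big[addb/false]_(j < n) true = odd n.
Proof. by rewrite big_const_ord; elim: n => //= n ->. Qed.

Lemma twisted_cylinder_cross (N m : nat) (t : nat -> 'I_N -> bool) :
  odd N -> (forall j, t m j = ~~ t 0 j) ->
  exists i j, i < m /\ (t i j != t i.+1 (ordS j)) && (t i (ordS j) != t i.+1 j).
Proof.
move=> oddN twist.
have [/existsP[i /existsP[j cross]] | /existsPn no_cross] := boolP
  [exists i : 'I_m, exists j, (t i j != t i.+1 (ordS j)) && (t i (ordS j) != t i.+1 j)].
  by exists i, j.
exfalso.
pose rowsum i := \big[addb/false]_(j < N) (t i j && t i (ordS j)).
have rowsum_step i : i < m -> rowsum i (+) rowsum i.+1 = false.
  move=> lt_im; move/existsPn: (no_cross (Ordinal lt_im)) => /= straight.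
  rewrite /rowsum -big_split /=.
  under eq_bigr => j _ do rewrite addb_square (negbTE (straight j)) addbF.
  by rewrite big_split /= (big_ordS _ (fun j => t i j && t i.+1 j)) addbb.
have rowsum_const i : i <= m -> rowsum i = rowsum 0.
  elim: i => // i IH lt_im.
  rewrite -(IH (ltnW lt_im)); move: (rowsum_step i lt_im).
  by case: (rowsum i); case: (rowsum i.+1).
have nandE a b : ~~ a && ~~ b = true (+) a (+) b (+) (a && b) by case: a; case: b.
have : rowsum m = odd N (+) rowsum 0.
  rewrite /rowsum; under eq_bigr => j _ do rewrite !twist nandE.
  by rewrite !big_split /= big_addb_true (big_ordS _ (t 0)) addbK.
by rewrite rowsum_const // oddN; case: (rowsum 0).
Qed.

Section CycleBox.

Variables q N : nat.
Hypothesis q_gt2 : 2 < q.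

Let q_gt0 : 0 < q := ltnW (ltnW q_gt2).

Local Notation G := (sg_box (UC q) (BC N)).

Definition row (i : nat) : 'I_q := Ordinal (ltn_pmod i q_gt0).

Lemma box_row_edge (u : 'I_q) (j : 'I_N) :
  sadj G (u, j) (u, ordS j) /\ ssign G (u, j) (u, ordS j) = false.
Proof. by rewrite /= eqxx /cycle_adj /= eqxx. Qed.

Lemma box_col_edge i (j : 'I_N) : i < q ->
  sadj G (row i, j) (row i.+1, j) /\ ssign G (row i, j) (row i.+1, j) = (i.+1 == q).
Proof.
move=> lt_iq; rewrite /= -val_eqE /= /cycle_adj /= (modn_small lt_iq) !eqxx /=.
move: lt_iq; rewrite leq_eqVlt => /orP[/eqP eq_Siq | lt_Siq].
  rewrite -eq_Siq modnn !eqxx orbT.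
  by have -> : (i == 0) = false by apply/eqP; lia.
rewrite (modn_small lt_Siq) (ltn_eqF lt_Siq).
have -> : (i == i.+1) = false by apply/eqP; lia.
have -> : (i == q.-1) = false by apply/eqP; lia.
by split=> //; apply/negbTE; apply/andP; case=> /eqP ? /eqP ?; lia.
Qed.

Lemma box_hom_alternating_square (H : sgraph) (phi : svert G -> svert H) :
  odd N -> simple_sgraph H -> sg_hom phi ->
  exists x1 x2 x3 x4 : svert H, alternating_square x1 x2 x3 x4.
Proof.
move=> oddN sH /sg_hom_lift[X cover_edge].
(* Row q is row 0 reached through the negative edges of UC_q, hence on the other sheet. *)
pose t i j := ((row i, j) \in X) (+) (i == q).
pose P i j := (phi (row i, j), t i j).
have row_edge i j : double_cover_adj (P i j) (P i (ordS j)).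
  have [uv sg_uv] := box_row_edge (row i) j.
  by apply: cover_edge; rewrite // sg_uv addbb.
have col_edge i j : i < q -> double_cover_adj (P i j) (P i.+1 j).
  move=> lt_iq; have [uv sg_uv] := box_col_edge j lt_iq.
  by apply: cover_edge; rewrite // sg_uv (ltn_eqF lt_iq).
have twist j : t q j = ~~ t 0 j.
  have row_q : row q = row 0 by apply: val_inj; rewrite /= modnn mod0n.
  by rewrite /t row_q eqxx (ltn_eqF q_gt0) addbT addbF.
have [i [j [lt_iq cross]]] := twisted_cylinder_cross oddN twist.
exists (P i j).1, (P i (ordS j)).1, (P i.+1 (ordS j)).1, (P i.+1 j).1.
apply: (double_cover_square_alternating (P4 := P i.+1 j) (row_edge i j)
  (col_edge i (ordS j) lt_iq) _ _ cross).
- by rewrite double_cover_adj_sym //; apply: row_edge.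
- by rewrite double_cover_adj_sym //; apply: col_edge.
Qed.

End CycleBox.

Lemma box_hom_card_gt4 (q N : nat) (H : sgraph)
    (phi : svert (sg_box (UC q) (BC N)) -> svert H) :
  2 < q -> odd N -> simple_sgraph H -> sg_hom phi -> 4 < #|svert H|.
Proof.
move=> q_gt2 oddN sH hom; rewrite ltnNge; apply/negP => small.
have [Y no_alt] := small_switching_no_alternating_square sH small.
have [x1 [x2 [x3 [x4]]]] := box_hom_alternating_square q_gt2 oddN (switched_simple Y sH)
  (sg_hom_switched Y hom).
by rewrite (negbTE (no_alt _ _ _ _)).
Qed.

Lemma cycle_adj_sym k : symmetric (@cycle_adj k).
Proof. by move=> i j; rewrite /cycle_adj orbC. Qed.

Lemma cycle_adj_irr k : 1 < k -> irreflexive (@cycle_adj k).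
Proof.
move=> k_gt1 [i lt_ik]; rewrite /cycle_adj /= orbb; apply/negbTE/eqP.
move: lt_ik; rewrite leq_eqVlt => /orP[/eqP Sik | lt_Sik].
  by rewrite -Sik modnn; lia.
by rewrite modn_small //; lia.
Qed.

Lemma UC_simple k : 1 < k -> simple_sgraph (UC k).
Proof.
by move=> k_gt1; split; [exact: cycle_adj_sym | split=> [|u v _ /=]];
  [exact: cycle_adj_irr | rewrite orbC].
Qed.

Lemma BC_simple k : 1 < k -> simple_sgraph (BC k).
Proof.
by move=> k_gt1; split; [exact: cycle_adj_sym | split; first exact: cycle_adj_irr].
Qed.

Lemma sg_box_simple (G H : sgraph) :
  simple_sgraph G -> simple_sgraph H -> simple_sgraph (sg_box G H).
Proof.
move=> [Gsym [Girr Gsg]] [Hsym [Hirr Hsg]]; split; [|split].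
- by move=> x y /=; rewrite (eq_sym x.1) (eq_sym x.2) Gsym Hsym.
- by move=> x /=; rewrite Girr Hirr !andbF.
- move=> x y /= /orP[/andP[/eqP-> xy] | /andP[_ xy]]; first by rewrite eqxx Hsg.
  rewrite (eq_sym y.1); case: eqP => [e | _]; last exact: Gsg.
  by rewrite e Girr in xy.
Qed.

Lemma signed_chi_exists (G : sgraph) : simple_sgraph G -> exists n, is_signed_chi G n.
Proof.
move=> sG.
pose admits n := exists H : sgraph,
  simple_sgraph H /\ #|svert H| = n /\ exists phi, @sg_hom G H phi.
have [|n [[admits_n n_min] _]] :=
  @dec_inh_nat_subset_has_unique_least_element admits (fun n => classic _).
  exists #|svert G|, G; do 2!split=> //; exists id; split=> //; exists set0 => u v _.
  by rewrite /switch_sign !inE !addbF.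
exists n; split=> // H phi sH hom; apply/leP/n_min.
by exists H; do 2!split=> //; exists phi.
Qed.

Theorem lemma6p1 (p q : nat) (hp : 1 <= p) (hq : 3 <= q) :
  exists n : nat, is_signed_chi (sg_box (UC q) (BC (2 * p + 1))) n /\ 4 < n.
Proof.
have N_gt1 : 1 < 2 * p + 1 by lia.
have [n chi_n] :=
  signed_chi_exists (sg_box_simple (UC_simple (ltnW hq)) (BC_simple N_gt1)).
exists n; split=> //.
have [[H [sH [<- [phi hom]]]] _] := chi_n.
apply: box_hom_card_gt4 hom => //.
by rewrite addn1 /= mul2n odd_double.
Qed.
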